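(* Let $G$ be a finite group and $T$ a $G$-transfer system. Then $(T,\mathrm{Hull}(T))$ and $(T,T_c)$ are compatible pairs.
   Context: A $G$-transfer system is a partial order $\to$ on the set of subgroups of $G$ such that: $K\to H$ implies $K\le H$; $H\to H$ for all $H$; $L\to K$ and $K\to H$ imply $L\to H$; $K\to H$ implies $K\cap L\to H\cap L$ for every $L\le G$; $K\to H$ implies $gKg^{-1}\to gHg^{-1}$ for all $g\in G$. A transfer system is saturated if whenever $L\le K\le H$ and $L\to H$ is in it, then $K\to H$ is in it; $\mathrm{Hull}(T)$ is the smallest saturated $G$-transfer system containing $T$, and $T_c$ is the complete transfer system containing $K\to H$ for all $K\le H\le G$. A pair $(T,T')$ of $G$-transfer systems is compatible if (1) $T\subseteq T'$, and (2) for all subgroups $A,B,C$ with $B,C\le A$: if $B\to A$ is in $T$ and $B\cap C\to B$ is in $T'$, then $C\to A$ is in $T'$. *)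

From mathcomp Require Import all_boot all_fingroup.
Set Implicit Arguments. Unset Strict Implicit. Unset Printing Implicit Defensive.
Local Open Scope group_scope.

Section TransferSystems.
Variable gT : finGroupType.

(* A relation on subgroups of G; [T K H] reads "K -> H". *)
Definition subgrp_rel := {group gT} -> {group gT} -> Prop.

Definition is_transfer_system (G : {group gT}) (T : subgrp_rel) : Prop :=
  [/\ (forall K H : {group gT}, T K H -> [/\ K \subset G, H \subset G & K \subset H]),
      (forall H : {group gT}, H \subset G -> T H H),
      (forall L K H : {group gT}, T L K -> T K H -> T L H),
      (forall K H L : {group gT}, L \subset G -> T K H -> T (K :&: L)%G (H :&: L)%G) &
      (forall (K H : {group gT}) (g : gT), g \in G -> T K H -> T (K :^ g)%G (H :^ g)%G)].

Definition saturated (G : {group gT}) (T : subgrp_rel) : Prop :=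
  forall L K H : {group gT},
    L \subset K -> K \subset H -> T L H -> T K H.

Definition sub_grel (T T' : subgrp_rel) : Prop := forall K H : {group gT}, T K H -> T' K H.

Definition hull (G : {group gT}) (T : subgrp_rel) : subgrp_rel :=
  fun K H => forall T' : subgrp_rel,
    is_transfer_system G T' -> saturated G T' -> sub_grel T T' -> T' K H.

Definition complete_ts (G : {group gT}) : subgrp_rel :=
  fun K H => K \subset H /\ H \subset G.

Definition compatible (G : {group gT}) (T T' : subgrp_rel) : Prop :=
  sub_grel T T' /\
  forall A B C : {group gT},
    A \subset G -> B \subset A -> C \subset A ->
    T B A -> T' (B :&: C)%G B -> T' C A.

End TransferSystems.
Arguments subgrp_rel gT : clear implicits.

From mathcomp Require Import all_boot all_fingroup.

(* If B -> A in T and B :&: C -> B in T', transitivity gives B :&: C -> A in T',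
   and saturation moves the source up to C, since B :&: C <= C <= A.  Both Hull(T)
   and T_c are transitive, saturated and contain T. *)

Section Compatibility.
Variables (gT : finGroupType) (G : {group gT}).
Implicit Type T : subgrp_rel gT.

Lemma compatible_saturated T (T' : subgrp_rel gT) :
  sub_grel T T' ->
  (forall L K H : {group gT}, T' L K -> T' K H -> T' L H) ->
  saturated G T' ->
  compatible G T T'.
Proof.
move=> sTT' trT' satT'; split=> // A B C _ _ sCA tBA tBC_B.
have tBC_A : T' (B :&: C)%G A by apply: trT' tBC_B (sTT' _ _ tBA).
by apply: satT' tBC_A; rewrite ?subsetIr.
Qed.

Lemma sub_hull T : sub_grel T (hull G T).
Proof. by move=> K H tKH T' _ _ sTT'; apply: sTT'. Qed.

Lemma hull_trans T L K H : hull G T L K -> hull G T K H -> hull G T L H.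
Proof.
move=> hLK hKH T' tsT' satT' sTT'; have [_ _ trT' _ _] := tsT'.
exact: trT' (hLK T' tsT' satT' sTT') (hKH T' tsT' satT' sTT').
Qed.

Lemma hull_saturated T : saturated G (hull G T).
Proof.
move=> L K H sLK sKH hLH T' tsT' satT' sTT'.
exact: satT' sLK sKH (hLH T' tsT' satT' sTT').
Qed.

Lemma sub_complete_ts T : is_transfer_system G T -> sub_grel T (complete_ts G).
Proof. by case=> tsub _ _ _ _ K H /tsub[_ ? ?]. Qed.

Lemma complete_ts_trans L K H :
  complete_ts G L K -> complete_ts G K H -> complete_ts G L H.
Proof. by case=> sLK _ [sKH sHG]; split; first exact: subset_trans sLK sKH. Qed.

Lemma complete_ts_saturated : saturated G (complete_ts G).
Proof. by move=> L K H _ sKH [_ sHG]. Qed.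

End Compatibility.

Theorem mainTheorem5 (gT : finGroupType) (G : {group gT}) (T : subgrp_rel gT) :
  is_transfer_system G T ->
  compatible G T (hull G T) /\ compatible G T (complete_ts G).
Proof.
move=> tsT; split; apply: compatible_saturated.
- exact: sub_hull.
- exact: hull_trans.
- exact: hull_saturated.
- exact: sub_complete_ts.
- exact: complete_ts_trans.
- exact: complete_ts_saturated.
Qed.
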